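(* Let $a,\delta>0$, $n\in\mathbb{N}$, and let $J$ be an isometry-invariant kernel on $\mathbb{H}^1_L$ such that $J(L^j)\ge(a+\delta)L\log(j)L^{-2j}$ for every $j\ge n$. Then for all $k\in\mathbb{N}$ with $(a+\delta)(1-L^{-k})\ge a$ and all subsets $A\subset\Lambda_{n,n+k}$ with $|A|=\gamma L^k$, \[\mathbb{P}_J\big(A\nsim\Lambda_{n,n+2k}\setminus\Lambda_{n,n+k}\big)\le n^{-\gamma a}.\]
   Context: $\mathbb{H}^1_L$ ($L\ge2$ an integer) is the group $\bigoplus_{i=1}^\infty\mathbb{Z}/L\mathbb{Z}$ with ultrametric $\|x-y\|=L^{\max\{i:x_i\neq y_i\}}$ for $x\neq y$; $\Lambda_n(x)$ is the ball of radius $L^n$ around $x$ (an $n$-block). An isometry-invariant kernel assigns to each edge $\{x,y\}$ a weight depending only on $\|x-y\|$, written $J(L^j)$ for edges of length $L^j$. $\mathbb{P}_J$: each edge open independently with probability $1-\exp(-J(e))$. For $n\le m$, $\Lambda_{n,m}$ is the set of $n$-blocks contained in $\Lambda_m(0)$. For sets $A,B$ of $n$-blocks, $A\nsim B$ is the event that there is no open edge with one endpoint in a block of $A$ and the other in a block of $B$. *)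

From HB Require Import structures.
From mathcomp Require Import all_boot all_order all_algebra.
From mathcomp Require Import all_classical all_reals all_analysis.
Set Implicit Arguments. Unset Strict Implicit. Unset Printing Implicit Defensive.
Import Order.TTheory GRing.Theory Num.Theory.
Local Open Scope ring_scope.

(* The ball Lambda_N(0) of H^1_L: points are vectors x = (x_1,...,x_N) with
   coordinates in Z/LZ (represented by 'I_L); coordinate i+1 of the paper is
   stored at index i : 'I_N.  All coordinates > N are 0. *)
Definition pt (L N : nat) := {ffun 'I_N -> 'I_L}.

(* lvl x y = max { i : x_i <> y_i } (and 0 if x = y); ||x - y|| = L ^ lvl x y *)
Definition lvl (L N : nat) (x y : pt L N) : nat :=
  (\max_(i : 'I_N | x i != y i) i.+1)%N.

Definition ball (L N : nat) (n : nat) (x : pt L N) : {set pt L N} :=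
  [set y | (lvl x y <= n)%N].

Definition inLam (L N : nat) (m : nat) (x : pt L N) : bool :=
  [forall i : 'I_N, (m <= i)%N ==> (val (x i) == 0%N)].

(* Lambda_{n,m}: the set of n-blocks contained in Lambda_m(0) *)
Definition blocks (L N : nat) (n m : nat) : {set {set pt L N}} :=
  [set ball n x | x in [pred x : pt L N | inLam m x]].

Definition edge (L N : nat) := {e : {set pt L N} | #|e| == 2%N}.

Definition elvl (L N : nat) (e : edge L N) : nat :=
  (\max_(x in val e) \max_(y in val e) lvl x y)%N.

Definition not_conn (L N : nat) (A B : {set {set pt L N}})
  (w : {ffun edge L N -> bool}) : bool :=
  [forall e : edge L N, w e ==>
     ~~ [exists x in val e, exists y in val e,
           [&& x != y, x \in finset.cover A & y \in finset.cover B]]].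

Definition perc_prob (R : realType) (E : finType) (p : E -> R)
  (ev : pred {ffun E -> bool}) : R :=
  \sum_(w : {ffun E -> bool} | ev w) \prod_(e : E) (if w e then p e else 1 - p e).

(* P_J restricted to the edges of Lambda_N(0): the isometry-invariant kernel J
   is given by J j = J(L^j); an edge of length L^j is open with probability
   1 - exp(-J(L^j)). *)
Definition PJ (R : realType) (L N : nat) (J : nat -> R)
  (ev : pred {ffun edge L N -> bool}) : R :=
  perc_prob (fun e : edge L N => 1 - expR (- J (elvl e))) ev.

From Pilot Require Import Defs.
From HB Require Import structures.
From mathcomp Require Import all_boot all_order all_algebra.
From mathcomp Require Import all_classical all_reals all_analysis.
From mathcomp Require Import ring lra.
Import Order.TTheory GRing.Theory Num.Theory.
Local Open Scope ring_scope.
Set Implicit Arguments. Unset Strict Implicit.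

(* An outcome in which A is not connected to the outer blocks has every edge
   between the cover of A and the complement of Lambda_{n+k}(0) closed, so its
   probability is at most exp (-W), W being the total J-weight of these edges.
   Each of the gamma L^(n+k) points of the cover of A has (L-1) L^(j-1)
   partners at distance L^j, each joined by an edge of weight at least
   (a+delta) ln(n) L^(1-2j); summed over n+k < j <= n+2k this telescopes to
   (a+delta) ln(n) (L^-(n+k) - L^-(n+2k)), whence
   W >= gamma (a+delta) (1 - L^-k) ln n >= gamma a ln n. *)

Section Ultrametric.

Variables L N : nat.
Implicit Types x y z : pt L N.

Lemma lvl_leP x y m :
  reflect (forall i : 'I_N, (m <= i)%N -> x i = y i) (lvl x y <= m)%N.
Proof.
apply: (iffP (bigmax_leqP (fun i : 'I_N => x i != y i) m (fun i => i.+1))) => H i.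
- by move=> hm; apply/eqP; apply: contraTT hm => /H; rewrite -ltnNge.
- by move=> ne; rewrite ltnNge; apply: contra ne => hm; rewrite (H i hm).
Qed.

Lemma lvlC x y : lvl x y = lvl y x.
Proof. by apply: eq_bigl => i; rewrite eq_sym. Qed.

Lemma lvl_xx x : lvl x x = 0%N.
Proof. by apply/eqP; rewrite -leqn0; apply/lvl_leP. Qed.

Lemma lvl_le_max x y z : (lvl x z <= maxn (lvl x y) (lvl y z))%N.
Proof.
apply/lvl_leP => i; rewrite geq_max => /andP[/lvl_leP-> // /lvl_leP-> //].
Qed.

Lemma lvl_le_dim x y : (lvl x y <= N)%N.
Proof. by apply/lvl_leP => i; rewrite leqNgt ltn_ord. Qed.

Lemma card_ball n x : (n <= N)%N -> #|Defs.ball n x| = (L ^ n)%N.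
Proof.
move=> nN.
pose F (i : 'I_N) : {set 'I_L} := if (i < n)%N then [set: 'I_L] else [set x i].
have -> : Defs.ball n x = setXn F.
  apply/setP => y; rewrite in_setXn inE; apply/lvl_leP/forallP => H i.
  - by rewrite /F; case: ltnP => hi; rewrite ?inE ?(H i hi).
  - by move=> hi; move: (H i); rewrite /F ltnNge hi inE => /eqP.
rewrite cardsXn (eq_bigr (fun i : 'I_N => if (i < n)%N then L else 1%N)); last first.
  by move=> i _; rewrite /F; case: ifP; rewrite ?cards1 ?cardsT ?card_ord.
rewrite -big_mkcond -(big_ord_widen _ (fun _ => L) nN).
by rewrite prod_nat_const card_ord.
Qed.

Lemma card_sphere x j : (0 < j <= N)%N ->
  #|[set y | lvl x y == j]| = (L ^ j.-1 * L.-1)%N.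
Proof.
case: j => // j jN; pose F (i : 'I_N) : {set 'I_L} :=
  if (i < j)%N then [set: 'I_L] else if i == j :> nat then [set~ x i] else [set x i].
have -> : [set y | lvl x y == j.+1] = setXn F.
  apply/setP => y; rewrite in_setXn inE eqn_leq; apply/andP/forallP.
  - case=> /lvl_leP H1 H2 i; rewrite /F; case: ltngtP => ij; rewrite ?inE //.
      by rewrite (H1 i ij).
    apply: contraL H2 => /eqP yx; rewrite -leqNgt; apply/lvl_leP => i'.
    rewrite leq_eqVlt => /predU1P[ji'|/H1 //].
    by have -> : i' = i by apply: val_inj; rewrite /= ij ji'.
  - move=> H; split.
      apply/lvl_leP => i ji; move: (H i); rewrite /F ltnNge ltnW //= gtn_eqF //.
      by rewrite inE => /eqP.
    rewrite ltnNge; apply/negP => /lvl_leP/(_ (Ordinal jN) (leqnn j)) xy.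
    by move: (H (Ordinal jN)); rewrite /F /= ltnn eqxx !inE xy eqxx.
pose G i := if (i < j)%N then L else if i == j then L.-1 else 1%N.
rewrite cardsXn (eq_bigr (fun i : 'I_N => G i)) => [|i _]; last first.
  by rewrite /F /G; case: ifP => _; [|case: ifP => _];
    rewrite ?cardsT ?cardsC1 ?cards1 ?card_ord.
rewrite (bigID (fun i : 'I_N => (i < j.+1)%N)) /= [X in (_ * X)%N]big1 => [|i].
  rewrite muln1 -(big_ord_widen _ G jN) big_ord_recr /= /G ltnn eqxx.
  by rewrite (eq_bigr (fun _ => L)) => [|i _]; rewrite ?ltn_ord // prod_nat_const card_ord.
by rewrite -leqNgt => ji; rewrite /G ltnNge ltnW //= gtn_eqF.
Qed.

Lemma sum_lvl_gt (V : nmodType) x m (f : nat -> V) :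
  \sum_(y | (m < lvl x y)%N) f (lvl x y) =
    \sum_(m.+1 <= j < N.+1) f j *+ (L ^ j.-1 * L.-1).
Proof.
rewrite big_geq_mkord /= (partition_big (fun y => inord (lvl x y) : 'I_N.+1)
  (fun j : 'I_N.+1 => (m < j)%N)) => [|y]; last by rewrite inordK // ltnS lvl_le_dim.
apply: eq_bigr => j mj; have j_range : (0 < j <= N)%N
  by rewrite (leq_ltn_trans (leq0n m) mj) -ltnS ltn_ord.
rewrite -(card_sphere x j_range) -sumr_const; apply: eq_big => y.
  rewrite inE -val_eqE /= inordK ?ltnS ?lvl_le_dim //.
  by case: eqP => [->|]; rewrite ?mj ?andbF.
by case/andP => _; rewrite -val_eqE /= inordK ?ltnS ?lvl_le_dim // => /eqP->.
Qed.

Lemma sum_far_weight (R : numFieldType) x m : (0 < L)%N -> (m <= N)%N ->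
  \sum_(y | (m < lvl x y)%N) (L%:R : R) ^- (2 * lvl x y) * L%:R =
    L%:R ^- m - L%:R ^- N.
Proof.
move=> L_gt0 mN; have L_neq0 : (L%:R : R) != 0 by rewrite pnatr_eq0 -lt0n.
rewrite (sum_lvl_gt _ _ (fun j => (L%:R : R) ^- (2 * j) * L%:R)).
rewrite (telescope_sumr_eq (fun j => - (L%:R : R) ^- j.-1)) //=.
  by rewrite opprK addrC.
move=> [|j] /andP[mj _] //=.
rewrite -[LHS]mulr_natr natrM natrX -subn1 natrB // mul2n -addnn.
rewrite exprD !exprSr; field; by rewrite !expf_neq0.
Qed.

End Ultrametric.

Section Blocks.

Variables L N n : nat.
Implicit Types x y z : pt L N.

Lemma ball_center x y : y \in Defs.ball n x -> Defs.ball n x = Defs.ball n y.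
Proof.
rewrite inE => xy; apply/setP => z; rewrite !inE; apply/idP/idP => h.
- by apply: leq_trans (lvl_le_max y x z) _; rewrite geq_max lvlC xy.
- by apply: leq_trans (lvl_le_max x y z) _; rewrite geq_max xy.
Qed.

Lemma trivIset_blocks m : finset.trivIset (blocks L N n m).
Proof.
apply/finset.trivIsetP => _ _ /imsetP[x1 _ ->] /imsetP[x2 _ ->]; apply: contraR.
by case/pred0Pn => y /andP[/ball_center-> /ball_center->].
Qed.

Lemma card_cover_blocks m (A : {set {set pt L N}}) :
  A \subset blocks L N n m -> (n <= N)%N -> #|finset.cover A| = (#|A| * L ^ n)%N.
Proof.
move=> sAB nN; rewrite -(eqP (finset.trivIsetS sAB (trivIset_blocks m))) -sum_nat_const.
apply: eq_bigr => B /(fintype.subsetP sAB)/imsetP[x _ ->]; exact: card_ball.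
Qed.

Lemma inLam_ball m x y : (n <= m)%N -> inLam m x -> y \in Defs.ball n x -> inLam m y.
Proof.
move=> nm /forallP x_m; rewrite inE => /lvl_leP xy; apply/forallP => i.
by apply/implyP => mi; rewrite -(xy i (leq_trans nm mi)); exact: implyP (x_m i) mi.
Qed.

Lemma lvl_gt_inLam m x y : inLam m x -> (m < lvl x y)%N = ~~ inLam m y.
Proof.
move=> /forallP x_m; rewrite ltnNge; congr negb; apply/lvl_leP/forallP => [xy|y_m] i.
- by apply/implyP => mi; rewrite -(xy i mi); exact: implyP (x_m i) mi.
- move=> mi; apply: val_inj.
  by rewrite (eqP (implyP (x_m i) mi)) (eqP (implyP (y_m i) mi)).
Qed.

Lemma cover_blocks_inLam m (A : {set {set pt L N}}) x :
  (n <= m)%N -> A \subset blocks L N n m -> x \in finset.cover A -> inLam m x.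
Proof.
move=> nm sAB /bigcupP[_ /(fintype.subsetP sAB)/imsetP[x0 x0_m ->]]; exact: inLam_ball.
Qed.

Lemma cover_outer_blocks m y : (n <= m)%N ->
  (y \in finset.cover (blocks L N n N :\: blocks L N n m)) = ~~ inLam m y.
Proof.
move=> nm; apply/bigcupP/idP => [[_ /setDP[/imsetP[x _ ->] not_m] yx]|y_m].
  apply: contra not_m => y_m; apply/imsetP; exists y => //.
  exact: ball_center.
exists (Defs.ball n y); last by rewrite inE lvl_xx.
apply/setDP; split.
  by apply/imsetP; exists y => //; rewrite inE; apply/forallP => i; rewrite leqNgt ltn_ord.
apply/imsetP => -[x x_m e]; move/negP: y_m; apply.
by apply: inLam_ball nm x_m _; rewrite -e inE lvl_xx.
Qed.

End Blocks.

Section Crossing.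

Variables L N : nat.
Implicit Types (x y : pt L N) (X Y : {set pt L N}) (e : edge L N).

Definition crossing X Y : {set edge L N} :=
  [set e : edge L N |
    [exists x in val e, exists y in val e, [&& x != y, x \in X & y \in Y]]].

Lemma crossingP X Y e :
  reflect (exists x y, [/\ x \in X, y \in Y, x != y & val e = [set x; y]])
          (e \in crossing X Y).
Proof.
apply: (iffP idP) => [|[x [y [xX yY xy exy]]]]; last first.
  by rewrite inE exy; apply/existsP; exists x; rewrite !inE eqxx /=;
     apply/existsP; exists y; rewrite !inE eqxx orbT xy xX yY.
rewrite inE => /existsP[x /andP[xe /existsP[y /andP[ye /and3P[xy xX yY]]]]].
exists x, y; split => //; apply/eqP.
rewrite eq_sym finset.eqEcard finset.subUset !finset.sub1set xe ye.
by rewrite cards2 xy (eqP (valP e)).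
Qed.

Lemma elvl_pair e x y : val e = [set x; y] -> elvl e = lvl x y.
Proof.
rewrite /elvl => ->; apply/eqP; rewrite eqn_leq; apply/andP; split.
  by apply/bigmax_leqP => u; rewrite !inE => /orP[]/eqP->;
     apply/bigmax_leqP => v; rewrite !inE => /orP[]/eqP->; rewrite ?lvl_xx // lvlC.
have xy_x : x \in [set x; y] by rewrite !inE eqxx.
have xy_y : y \in [set x; y] by rewrite !inE eqxx orbT.
pose in_xy := fun u => u \in [set x; y].
apply: leq_trans
  (@leq_bigmax_cond _ in_xy (fun u => \max_(v in [set x; y]) lvl u v) x xy_x).
exact: (@leq_bigmax_cond _ in_xy (lvl x) y xy_y).
Qed.

Lemma sum_crossing (V : nmodType) X Y (F : nat -> V) : [disjoint X & Y] ->
  \sum_(e in crossing X Y) F (elvl e) = \sum_(x in X) \sum_(y in Y) F (lvl x y).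
Proof.
move=> dXY; rewrite pair_big_dep /=.
have neq q : (q.1 \in X) && (q.2 \in Y) -> q.1 != q.2.
  by case/andP=> xX yY; apply: contraTneq xX => ->; rewrite (disjointFl dXY).
case: (pickP [pred q : pt L N * pt L N | (q.1 \in X) && (q.2 \in Y)])
  => [q0 q0XY|noXY]; last first.
  rewrite big1 => [|e /crossingP[x [y [xX yY _ _]]]].
    by rewrite big1 // => q qXY; move: (noXY q); rewrite /= qXY.
  by move: (noXY (x, y)); rewrite /= xX yY.
(* e0 is only the default value of insubd, never reached on X x Y. *)
have e0P : #|[set q0.1; q0.2]| == 2%N by rewrite cards2 neq.
pose e0 : edge L N := exist (fun s : {set pt L N} => #|s| == 2%N) _ e0P.
pose toedge (q : pt L N * pt L N) : edge L N := insubd e0 [set q.1; q.2].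
have val_toedge q : (q.1 \in X) && (q.2 \in Y) -> val (toedge q) = [set q.1; q.2].
  by move=> /neq xy; rewrite val_insubd cards2 xy.
have -> : crossing X Y = toedge @: [set q | (q.1 \in X) && (q.2 \in Y)].
  apply/setP => e; apply/crossingP/imsetP => [[x [y [xX yY xy exy]]] | [q qXY ->]].
    exists (x, y); first by rewrite inE xX yY.
    by apply: val_inj; rewrite val_toedge ?xX ?yY.
  rewrite inE in qXY; case/andP: (qXY) => q1X q2Y.
  by exists q.1, q.2; split; rewrite ?neq ?val_toedge.
rewrite big_imset /= => [|[x y] [x' y']]; last first.
  rewrite !inE /= => /andP[xX yY] /andP[xX' yY'] /(congr1 val).
  rewrite !val_toedge /= ?xX ?yY ?xX' ?yY' // => exy.
  have x_in : x \in [set x'; y'] by rewrite -exy !inE eqxx.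
  have y_in : y \in [set x'; y'] by rewrite -exy !inE eqxx orbT.
  move: x_in y_in; rewrite !inE => /orP[/eqP-> | /eqP xy'] /orP[/eqP yx' | /eqP-> //].
  1,2: by move: xX'; rewrite -yx' (disjointFl dXY yY).
  by move: yY'; rewrite -xy' (disjointFr dXY xX).
apply: eq_big => [q|q qXY]; first by rewrite inE.
by rewrite inE in qXY; rewrite (elvl_pair (val_toedge q qXY)).
Qed.

End Crossing.

Lemma perc_prob_closed_le (R : realType) (E : finType) (p : E -> R)
    (ev : pred {ffun E -> bool}) (S : {set E}) :
  (forall e, 0 <= p e <= 1) -> (forall w, ev w -> forall e, e \in S -> ~~ w e) ->
  perc_prob p ev <= \prod_(e in S) (1 - p e).
Proof.
move=> p01 evS.
(* G e is the law of the state of e once the edges of S are forced closed. *)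
pose G e (b : bool) := if b then (if e \in S then 0 else p e) else 1 - p e.
have G_ge0 e b : 0 <= G e b.
  by case/andP: (p01 e) => p0 p1; rewrite /G; case: b; case: (e \in S); rewrite ?subr_ge0.
have -> : \prod_(e in S) (1 - p e) = \sum_(w : {ffun E -> bool}) \prod_e G e (w e).
  rewrite -(bigA_distr_bigA G) big_mkcond; apply: eq_bigr => e _.
  by rewrite big_bool /= /G; case: (e \in S); rewrite ?add0r // addrCA subrr addr0.
rewrite [X in _ <= X](bigID ev) /= -[X in X <= _]addr0.
rewrite lerD ?sumr_ge0 // => [|w _]; last by apply: prodr_ge0 => e _.
rewrite /perc_prob (eq_bigr (fun w : {ffun E -> bool} => \prod_e G e (w e))) //.
move=> w /evS w_S.
apply: eq_bigr => e _; rewrite /G.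
by case: ifP => // we; case: ifP => // /w_S; rewrite we.
Qed.

Lemma PJ_not_conn_le (R : realType) L N (J : nat -> R) (A B : {set {set pt L N}}) :
  (forall j, 0 <= J j) ->
  PJ J (not_conn A B) <=
    expR (- \sum_(e in crossing (finset.cover A) (finset.cover B)) J (elvl e)).
Proof.
move=> J_ge0; rewrite -sumrN expR_sum.
pose S := crossing (finset.cover A) (finset.cover B).
apply: le_trans (perc_prob_closed_le (S := S) _ _) _ => [e|w /forallP w_closed e e_cross|].
- by rewrite subr_ge0 gerBl expR_ge0 expR_le1 oppr_le0 J_ge0.
- by apply: contraTN e_cross => we; move: (w_closed e); rewrite we /crossing inE.
- by under eq_bigr do rewrite subKr.
Qed.

Lemma crossing_weight_ge (R : realType) L N n m (J : nat -> R) (c : R)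
    (A : {set {set pt L N}}) :
  (0 < L)%N -> (n <= m <= N)%N ->
  (forall j, (m < j)%N -> c * ((L%:R : R) ^- (2 * j) * L%:R) <= J j) ->
  A \subset blocks L N n m ->
  (#|A| * L ^ n)%N%:R * (c * (L%:R ^- m - L%:R ^- N)) <=
    \sum_(e in crossing (finset.cover A) (finset.cover (blocks L N n N :\: blocks L N n m)))
      J (elvl e).
Proof.
move=> L_gt0 /andP[nm mN] J_ge sAB.
have A_m x : x \in finset.cover A -> inLam m x by exact: cover_blocks_inLam nm sAB.
rewrite sum_crossing; last first.
  by apply/pred0P => x /=; apply/andP => -[/A_m x_m]; rewrite cover_outer_blocks ?x_m.
rewrite -(card_cover_blocks sAB (leq_trans nm mN)) mulr_natl -sumr_const.
apply: ler_sum => x /A_m x_m; rewrite -(sum_far_weight _ x) // mulr_sumr.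
rewrite [X in _ <= X](eq_bigl (fun y => m < lvl x y)%N) => [|y]; last first.
  by rewrite cover_outer_blocks // lvl_gt_inLam.
by apply: ler_sum => y /J_ge.
Qed.

Unset Implicit Arguments.
Set Strict Implicit.

Theorem lemma5p5 (R : realType) (L : nat) (a delta : R) (n : nat) (J : nat -> R) :
  (2 <= L)%N -> 0 < a -> 0 < delta -> (1 <= n)%N ->
  (forall j : nat, 0 <= J j) ->
  (forall j : nat, (n <= j)%N ->
     (a + delta) * L%:R * ln (j%:R) * (L%:R ^- (2 * j)) <= J j) ->
  forall (k : nat), a <= (a + delta) * (1 - L%:R ^- k) ->
  forall (A : {set {set pt L (n + 2 * k)}}) (gamma : R),
    A \subset blocks L (n + 2 * k) n (n + k) ->
    #|A|%:R = gamma * L%:R ^+ k ->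
    PJ J (not_conn A (blocks L (n + 2 * k) n (n + 2 * k) :\: blocks L (n + 2 * k) n (n + k)))
      <= powR (n%:R) (- (gamma * a)).
Proof.
move=> L2 a_gt0 d_gt0 n_gt0 J_ge0 J_ge k hk A gamma sAB cardA.
have L_gt0 : (0 < L%:R :> R) by rewrite ltr0n ltnW.
have ln_n_ge0 : 0 <= ln (n%:R : R) by rewrite ln_ge0 // ler1n.
pose c := (a + delta) * ln (n%:R : R).
have J_ge_far j : (n + k < j)%N -> c * ((L%:R : R) ^- (2 * j) * L%:R) <= J j.
  move=> nkj; have nj : (n <= j)%N by rewrite ltnW // (leq_ltn_trans (leq_addr k n)).
  have ln_nj : ln (n%:R : R) <= ln j%:R.
    by rewrite ler_ln ?ler_nat // posrE ltr0n ?(leq_trans n_gt0).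
  have w_ge0 : 0 <= (a + delta) * ((L%:R : R) ^- (2 * j) * L%:R).
    by rewrite !mulr_ge0 ?addr_ge0 ?invr_ge0 ?exprn_ge0 ?ltW.
  apply: le_trans (J_ge j nj); rewrite /c; nra.
apply: le_trans (PJ_not_conn_le _ _ J_ge0) _.
rewrite /powR gt_eqF ?ltr0n // ler_expR mulNr lerN2.
have nk_n2k : (n <= n + k <= n + 2 * k)%N by rewrite leq_addr leq_add2l leq_pmull.
apply: le_trans (crossing_weight_ge (ltnW L2) nk_n2k J_ge_far sAB).
have g_ge0 : 0 <= gamma by rewrite -(pmulr_lge0 _ (exprn_gt0 k L_gt0)) -cardA ler0n.
rewrite natrM cardA natrX mul2n -addnn !exprD /c.
rewrite [X in _ <= X](_ : _ = gamma * ln (n%:R) * ((a + delta) * (1 - L%:R ^- k))).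
  by rewrite mulrAC ler_wpM2l ?mulr_ge0.
set u := (L%:R : R) ^+ n; set v := (L%:R : R) ^+ k.
have [u_neq0 v_neq0] : u != 0 /\ v != 0 by split; rewrite expf_neq0 // gt_eqF.
by field; rewrite u_neq0 v_neq0.
Qed.
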